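(* Let $(X_B,X_C,X_R)$ be an OCC (not necessarily tight) in a graph $G$ and let $(A_B,A_C,A_R)$ be a tight OCC in $G$. Then $|A_C \cap X_B| \leq |X_C|$.
   Context: An OCT of $G$ is a set $S \subseteq V(G)$ with $G - S$ bipartite; $\mathrm{oct}(G)$ is its minimum size. An odd cycle cut (OCC) of $G$ is a partition $(X_B, X_C, X_R)$ of $V(G)$ such that $G[X_B]$ is bipartite, there is no edge between $X_B$ and $X_R$, and $X_B \cup X_C \neq \emptyset$. It is tight if $|X_C| = \mathrm{oct}(G[X_B \cup X_C])$. *)

From mathcomp Require Import all_boot all_order.
Set Implicit Arguments. Unset Strict Implicit. Unset Printing Implicit Defensive.

Definition simple_graph (T : finType) (e : rel T) : Prop :=
  symmetric e /\ irreflexive e.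

Definition bipartite_on (T : finType) (e : rel T) (S : {set T}) : bool :=
  [exists f : {ffun T -> bool},
     [forall x, forall y, [&& x \in S, y \in S & e x y] ==> (f x != f y)]].

Definition is_oct (T : finType) (e : rel T) (S O : {set T}) : bool :=
  (O \subset S) && bipartite_on e (S :\: O).

(* oct(G[S]) : minimum size of an OCT of G[S] (S itself is always an OCT,
   so #|S| is a valid initial value for the minimum). *)
Definition oct (T : finType) (e : rel T) (S : {set T}) : nat :=
  \big[minn/#|S|]_(O in powerset S | is_oct e S O) #|O|.

Definition is_partition3 (T : finType) (XB XC XR : {set T}) : Prop :=
  [/\ [disjoint XB & XC], [disjoint XB & XR], [disjoint XC & XR]
    & XB :|: XC :|: XR = setT].

Definition is_occ (T : finType) (e : rel T) (XB XC XR : {set T}) : Prop :=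
  [/\ is_partition3 XB XC XR,
      bipartite_on e XB,
      (forall x y, x \in XB -> y \in XR -> ~~ e x y)
    & XB :|: XC != set0].

Definition is_tight_occ (T : finType) (e : rel T) (XB XC XR : {set T}) : Prop :=
  is_occ e XB XC XR /\ #|XC| = oct e (XB :|: XC).

(* Let S = A_B ∪ A_C.  Deleting O = (A_C \ X_B) ∪ (X_C ∩ S) from S leaves a
   subset of X_B ∪ (A_B ∩ X_R): two bipartite pieces with no edge between
   them, since X_B and X_R are not adjacent.  So O is an OCT of G[S], and
   tightness gives |A_C| = oct(G[S]) <= |A_C \ X_B| + |X_C|, i.e.
   |A_C ∩ X_B| <= |X_C|. *)

From HB Require Import structures.
From mathcomp Require Import all_boot all_order.

Set Implicit Arguments.
Unset Strict Implicit.
Unset Printing Implicit Defensive.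

HB.instance Definition _ := SemiGroup.isComLaw.Build nat minn minnA minnC.

Section OddCycleTransversals.

Variables (T : finType) (e : rel T).

Lemma oct_le (S O : {set T}) : is_oct e S O -> oct e S <= #|O|.
Proof.
move=> octO; have /andP[sOS _] := octO.
by rewrite /oct (bigD1 O) ?powersetE ?sOS //= geq_minl.
Qed.

Lemma bipartite_onS (A B : {set T}) :
  A \subset B -> bipartite_on e B -> bipartite_on e A.
Proof.
move=> sAB /existsP[f fP]; apply/existsP; exists f.
apply/forallP=> x; apply/forallP=> y; apply/implyP=> /and3P[xA yA exy].
by have := forallP (forallP fP x) y; rewrite !(subsetP sAB) // exy.
Qed.

Lemma bipartite_onU (A B : {set T}) :
  symmetric e -> (forall x y, x \in A -> y \in B -> ~~ e x y) ->
  bipartite_on e A -> bipartite_on e B -> bipartite_on e (A :|: B).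
Proof.
move=> esym noAB /existsP[fA fAP] /existsP[fB fBP].
have inB z : z \in A :|: B -> z \notin A -> z \in B.
  by rewrite inE => /orP[-> //|].
apply/existsP; exists [ffun x => if x \in A then fA x else fB x].
apply/forallP=> x; apply/forallP=> y; apply/implyP=> /and3P[xAB yAB exy].
rewrite !ffunE; case: ifPn => xA; case: ifPn => yA.
- by have := forallP (forallP fAP x) y; rewrite xA yA exy.
- by have := noAB x y xA (inB y yAB yA); rewrite exy.
- by have := noAB y x yA (inB x xAB xA); rewrite esym exy.
- by have := forallP (forallP fBP x) y; rewrite inB ?inB ?exy.
Qed.

Variables (XB XC XR AB AC AR : {set T}).
Hypotheses (esym : symmetric e) (occX : is_occ e XB XC XR)
           (occA : is_occ e AB AC AR).

Let S := AB :|: AC.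
Let O := (AC :\: XB) :|: (XC :&: S).

Lemma occ_glue_residue_sub : S :\: O \subset XB :|: (AB :&: XR).
Proof.
have [[_ _ _ coverX] _ _ _] := occX.
apply/subsetP=> x xSO; have: x \in XB :|: XC :|: XR by rewrite coverX.
move: xSO; rewrite !inE.
by case: (x \in XB); case: (x \in XC); case: (x \in AB); case: (x \in AC).
Qed.

Lemma occ_glue_is_oct : is_oct e S O.
Proof.
have [_ bipXB noXBR _] := occX; have [_ bipAB _ _] := occA.
apply/andP; split.
  by rewrite /O /S subUset subsetIr subDset subsetU ?subsetUr ?orbT.
apply: bipartite_onS occ_glue_residue_sub _; apply: bipartite_onU => //.
- by move=> x y xB /setIP[_ yR]; apply: noXBR.
- exact: bipartite_onS (subsetIl _ _) bipAB.
Qed.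

Lemma card_occ_glue : #|O| <= #|AC :\: XB| + #|XC|.
Proof.
apply: leq_trans (leq_card_setU _ _) _.
by rewrite leq_add2l subset_leq_card ?subsetIl.
Qed.

End OddCycleTransversals.

Theorem mainTheorem9 (T : finType) (e : rel T) (XB XC XR AB AC AR : {set T}) :
  simple_graph e ->
  is_occ e XB XC XR ->
  is_tight_occ e AB AC AR ->
  #|AC :&: XB| <= #|XC|.
Proof.
move=> [esym _] occX [occA tightA].
have := leq_trans (oct_le (occ_glue_is_oct esym occX occA)) (card_occ_glue _ _ _ _).
by rewrite -tightA -(cardsID XB AC) addnC leq_add2l.
Qed.
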